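(* Let $\alpha\ge1$ and $N\ge2$. Let $A,B$ be increasing Borel subsets of $\Omega_N$ with $\pi_{N,\alpha}(A),\pi_{N,\alpha}(B)>0$ such that $x\in A$ and $x'\in B$ imply $x\wedge x'\in B$. Then $\pi_{N,\alpha}(\cdot\mid A)$ stochastically dominates $\pi_{N,\alpha}(\cdot\mid B)$, i.e. $\pi_{N,\alpha}(f\mid A)\ge\pi_{N,\alpha}(f\mid B)$ for every increasing function $f$.
   Context: $\Omega_N=\{x\in\mathbb{R}^{N-1}:0\le x_1\le\dots\le x_{N-1}\le N\}$, $x_0=0,x_N=N$; $\pi_{N,\alpha}(dx)=\frac{\Gamma(N\alpha)}{\Gamma(\alpha)^NN^{N\alpha-1}}\prod_{i=1}^N(x_i-x_{i-1})^{\alpha-1}dx$. Increasing means w.r.t. coordinatewise order; a set is increasing if its indicator is. $(x\wedge x')_i=\min(x_i,x'_i)$. *)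

From HB Require Import structures.
From mathcomp Require Import all_boot all_order all_algebra.
From mathcomp Require Import all_classical all_reals all_analysis.

Import Order.TTheory GRing.Theory Num.Theory.
Import numFieldNormedType.Exports.
Local Open Scope classical_set_scope.
Local Open Scope ring_scope.

Definition Gamma (R : realType) (s : R) : R :=
  fine (\int[@lebesgue_measure R]_(t in `]0%R, +oo[) (powR t (s - 1) * expR (- t))%:E)%E.

(* For the bounded,
   boundedly supported Borel integrands used below this is the Lebesgue
   integral over R^n (Fubini). *)
Fixpoint Riter (R : realType) (n : nat) : (n.-tuple R -> R) -> R :=
  match n return (n.-tuple R -> R) -> R with
  | 0 => fun g => g [tuple]
  | n'.+1 => fun g =>
      \int[@lebesgue_measure R]_(t in [set: R]) Riter R n' (fun x => g (cons_tuple t x))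
  end.

(* Extended coordinates of x in R^(N-1): x_0 = 0, x_k (1 <= k <= N-1), x_N = N. *)
Definition xc (R : realType) (N : nat) (x : N.-1.-tuple R) (k : nat) : R :=
  if k == 0%N then 0 else if k == N then N%:R else nth 0 x k.-1.

Definition Omega (R : realType) (N : nat) : set (N.-1.-tuple R) :=
  [set x | forall k : nat, (k < N)%N -> xc R N x k <= xc R N x k.+1].

Definition dens (R : realType) (N : nat) (alpha : R) (x : N.-1.-tuple R) : R :=
  \prod_(1 <= i < N.+1) powR (xc R N x i - xc R N x i.-1) (alpha - 1).

Definition Zconst (R : realType) (N : nat) (alpha : R) : R :=
  Gamma R (N%:R * alpha) / (Gamma R alpha ^+ N * powR N%:R (N%:R * alpha - 1)).

Definition piN (R : realType) (N : nat) (alpha : R) (g : N.-1.-tuple R -> R) : R :=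
  Zconst R N alpha * Riter R N.-1 (fun x => \1_(Omega R N) x * dens R N alpha x * g x).

Definition piNset (R : realType) (N : nat) (alpha : R) (A : set (N.-1.-tuple R)) : R :=
  piN R N alpha (\1_A).

Definition condE (R : realType) (N : nat) (alpha : R)
    (f : N.-1.-tuple R -> R) (A : set (N.-1.-tuple R)) : R :=
  piN R N alpha (fun x => f x * \1_A x) / piNset R N alpha A.

Definition tle (R : realType) (n : nat) (x y : n.-tuple R) : Prop :=
  forall i : 'I_n, tnth x i <= tnth y i.

Definition tmin (R : realType) (n : nat) (x y : n.-tuple R) : n.-tuple R :=
  [tuple Num.min (tnth x i) (tnth y i) | i < n].

Definition incr_fun (R : realType) (N : nat) (f : N.-1.-tuple R -> R) : Prop :=
  forall x y, Omega R N x -> Omega R N y -> tle R N.-1 x y -> f x <= f y.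

Definition incr_set (R : realType) (N : nat) (A : set (N.-1.-tuple R)) : Prop :=
  A `<=` Omega R N /\ incr_fun R N (\1_A : N.-1.-tuple R -> R).

From HB Require Import structures.
From mathcomp Require Import all_boot all_order all_algebra.
From mathcomp Require Import all_classical all_reals all_analysis.
From mathcomp Require Import lra ring zify measurable_realfun.

(* For alpha >= 1 every factor
   (x_i - x_(i-1))^(alpha-1) of the density is log-supermodular on Omega_N, so
   the weight w = 1_Omega * dens satisfies w x * w y <= w (x \/ y) * w (x /\ y).
   With h = f - f(0), nonnegative and increasing on Omega_N, the four functions
   w 1_A, w h 1_B, w h 1_A, w 1_B then meet the hypothesis of the
   Ahlswede-Daykin four functions theorem on the coordinatewise lattice R^(N-1)
   (A is increasing, so x \/ y stays in A; x /\ y lies in B by assumption),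
   which gives pi(1_A) pi(h 1_B) <= pi(h 1_A) pi(1_B): the claim after
   undoing the shift by f(0).  The four functions theorem is proved by
   induction on the dimension, integrating out one coordinate at a time; on
   the line, each product of two integrals is an integral over the square of
   A(s) B(t) or, swapping the factors, of A(t) B(s), and the symmetrized
   integrand is compared pointwise by the two-point case. *)

Set Implicit Arguments.
Unset Strict Implicit.
Unset Printing Implicit Defensive.

Import Order.TTheory GRing.Theory Num.Theory.
Import numFieldNormedType.Exports.
Local Open Scope classical_set_scope.
Local Open Scope ring_scope.

Lemma ahlswede_daykin_pair (R : realFieldType) (a1 a2 b1 b2 c1 c2 d1 d2 : R) :
  0 <= a1 -> 0 <= a2 -> 0 <= b1 -> 0 <= b2 -> 0 <= c1 -> 0 <= c2 -> 0 <= d1 -> 0 <= d2 ->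
  a1 * b1 <= c1 * d1 -> a2 * b2 <= c2 * d2 -> a1 * b2 <= c2 * d1 -> a2 * b1 <= c2 * d1 ->
  a1 * b2 + a2 * b1 <= c1 * d2 + c2 * d1.
Proof.
move=> ha1 ha2 hb1 hb2 hc1 hc2 hd1 hd2 h11 h22 h12 h21.
(* For x := c2 d1 > 0: expand 0 <= (x - a1 b2) (x - a2 b1) and use
   a1 b2 * a2 b1 <= c1 d2 * x, then divide by x. *)
set x := c2 * d1 in h12 h21 *.
have [x0|xpos] := eqVneq x 0.
  have := mulr_ge0 ha1 hb2; have := mulr_ge0 ha2 hb1; have := mulr_ge0 hc1 hd2; lra.
have xp : 0 < x by rewrite lt_def xpos mulr_ge0.
suff : x * (a1 * b2 + a2 * b1) <= x * (c1 * d2 + c2 * d1) by rewrite ler_pM2l.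
have p : 0 <= (x - a1 * b2) * (x - a2 * b1) by apply: mulr_ge0; rewrite subr_ge0.
have q : (a1 * b2) * (a2 * b1) <= (c1 * d2) * x.
  rewrite mulrACA [X in X <= _](_ : _ = (a1 * b1) * (a2 * b2)); last by ring.
  rewrite /x [X in _ <= X](_ : _ = (c1 * d1) * (c2 * d2)); last by ring.
  by apply: ler_pM => //; apply: mulr_ge0.
rewrite /x in p q *; nra.
Qed.

Lemma lee_twice (R : realType) (x y : \bar R) : (x + x <= y + y -> x <= y)%E.
Proof.
case: x => [x| |]; case: y => [y| |] //=; rewrite ?leey ?leNye //.
by rewrite !lee_fin => ?; lra.
Qed.

Section product_of_integrals.
Local Open Scope ereal_scope.
Context (R : realType) d (T : measurableType d) (m : {sigma_finite_measure set T -> \bar R}).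
Variables A B : T -> R.
Hypotheses (mA : measurable_fun setT A) (mB : measurable_fun setT B).
Hypotheses (A0 : forall s, (0 <= A s)%R) (B0 : forall s, (0 <= B s)%R).

Lemma emeasurable_pair_mul : measurable_fun setT (fun z : T * T => (A z.1 * B z.2)%:E).
Proof.
apply/measurable_EFinP; apply: measurable_funM.
  exact: measurableT_comp mA measurable_fst.
exact: measurableT_comp mB measurable_snd.
Qed.

Lemma emeasurable_pair_mul_swap :
  measurable_fun setT (fun z : T * T => (A z.2 * B z.1)%:E).
Proof.
apply/measurable_EFinP; apply: measurable_funM.
  exact: measurableT_comp mA measurable_snd.
exact: measurableT_comp mB measurable_fst.
Qed.

Lemma ge0_integralM_iter :
  \int[m]_s (A s)%:E * \int[m]_t (B t)%:E = \int[m]_s \int[m]_t (A s * B t)%:E.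
Proof.
rewrite -ge0_integralZr //; last 3 first.
- exact/measurable_EFinP.
- by move=> x _; rewrite lee_fin.
- by apply: integral_ge0 => x _; rewrite lee_fin.
apply: eq_integral => s _.
under [RHS]eq_integral do rewrite EFinM.
rewrite ge0_integralZl // ?lee_fin //.
- exact/measurable_EFinP.
- by move=> t _; rewrite lee_fin.
Qed.

Lemma ge0_integralM_prod :
  \int[m]_s (A s)%:E * \int[m]_t (B t)%:E = \int[m \x m]_z (A z.1 * B z.2)%:E.
Proof.
rewrite ge0_integralM_iter fubini_tonelli1 //; first exact: emeasurable_pair_mul.
by move=> z; rewrite lee_fin mulr_ge0.
Qed.

Lemma ge0_integralM_prod_swap :
  \int[m]_s (A s)%:E * \int[m]_t (B t)%:E = \int[m \x m]_z (A z.2 * B z.1)%:E.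
Proof.
rewrite ge0_integralM_iter fubini_tonelli2 //; first exact: emeasurable_pair_mul_swap.
by move=> z; rewrite lee_fin mulr_ge0.
Qed.

End product_of_integrals.

Section ahlswede_daykin_line.
Variable R : realType.
Notation mu := (@lebesgue_measure R).

Lemma ahlswede_daykin_line (A B C D : R -> R) :
  measurable_fun setT A -> measurable_fun setT B ->
  measurable_fun setT C -> measurable_fun setT D ->
  (forall s, 0 <= A s) -> (forall s, 0 <= B s) ->
  (forall s, 0 <= C s) -> (forall s, 0 <= D s) ->
  (forall s t, A s * B t <= C (Num.max s t) * D (Num.min s t)) ->
  (\int[mu]_s (A s)%:E * \int[mu]_t (B t)%:E <= \int[mu]_s (C s)%:E * \int[mu]_t (D t)%:E)%E.
Proof.
move=> mA mB mC mD A0 B0 C0 D0 H; apply: lee_twice.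
rewrite {1}ge0_integralM_prod // ge0_integralM_prod_swap //.
rewrite {1}ge0_integralM_prod // ge0_integralM_prod_swap //.
rewrite -!ge0_integralD //; try by [move=> z _; rewrite lee_fin mulr_ge0
  | exact: emeasurable_pair_mul | exact: emeasurable_pair_mul_swap].
apply: ge0_le_integral => //; try by move=> z _; rewrite -EFinD lee_fin addr_ge0 ?mulr_ge0.
1,2: by apply: emeasurable_funD; [exact: emeasurable_pair_mul|exact: emeasurable_pair_mul_swap].
move=> [s t] _; rewrite -!EFinD lee_fin /=.
wlog st : s t / s <= t.
  move=> W; have [/W//|/ltW ts] := leP s t.
  by have := W t s ts; lra.
have := H s t; have := H t s; have := H s s; have := H t t.
rewrite (max_r st) (min_l st) (max_l st) (min_r st) !maxxx !minxx => htt hss hts hst.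
exact: ahlswede_daykin_pair.
Qed.

End ahlswede_daykin_line.

Section bounded_supported.
Variable R : realType.
Notation mu := (@lebesgue_measure R).
Variables (h : R -> R) (M K : R).
Hypotheses (K0 : 0 < K) (mh : measurable_fun setT h).
Hypotheses (hM : forall s, `|h s| <= M) (hK : forall s, K < `|s| -> h s = 0).

Lemma integral_abs_bounded_supported :
  (\int[mu]_s `|(h s)%:E| <= (M * (K + K))%:E)%E.
Proof.
have M0 : 0 <= M by apply: le_trans (hM 0).
pose I := `[-K, K]%classic : set R.
have mI : measurable I by exact: measurable_itv.
have le_indic s : (`|(h s)%:E| <= (M * \1_I s)%:E)%E.
  rewrite lee_fin /=; have [sK|Ks] := leP `|s| K.
    by rewrite indicE mem_set ?mulr1 // /I /= in_itv /= -ler_norml.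
  by rewrite hK // normr0 mulr_ge0.
apply: (@le_trans _ _ (\int[mu]_s (M * \1_I s)%:E)%E).
  apply: ge0_le_integral => //.
  - exact/measurableT_comp/measurable_EFinP.
  - by apply/measurable_EFinP/measurable_funM => //; exact: measurable_indic.
under eq_integral do rewrite EFinM.
rewrite ge0_integralZl_EFin //; last exact/measurable_EFinP/measurable_indic.
rewrite integral_indic // setIT.
by rewrite /I [X in (_ * X)%E]lebesgue_measure_itv /= lte_fin gtrN // -EFinD -EFinM opprK.
Qed.

Lemma integrable_bounded_supported : mu.-integrable setT (EFin \o h).
Proof.
apply/integrableP; split; first exact/measurable_EFinP.
by apply: le_lt_trans integral_abs_bounded_supported _; rewrite ltry.
Qed.

Lemma Rintegral_bounded_supported : `|\int[mu]_(s in setT) h s| <= M * (K + K).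
Proof.
rewrite -lee_fin EFin_normr_Rintegral //; last exact: integrable_bounded_supported.
apply: le_trans integral_abs_bounded_supported.
by apply: le_abse_integral => //; exact/measurable_EFinP.
Qed.

End bounded_supported.

Section Riter_theory.
Variable R : realType.
Notation mu := (@lebesgue_measure R).

Lemma measurable_Rintegral_param d (T : measurableType d) (H : T * R -> R) :
  measurable_fun setT H -> measurable_fun setT (fun p => \int[mu]_(y in setT) H (p, y)).
Proof.
move=> mH; apply: (measurableT_comp (fine_measurable measurableT)) => /=.
have mEH : measurable_fun setT (EFin \o H) by exact/measurable_EFinP.
have -> : (fun p => \int[mu]_(y in setT) (H (p, y))%:E)%E =
    (fun p => \int[mu]_(y in setT) (EFin \o H)^\+ (p, y)
            - \int[mu]_(y in setT) (EFin \o H)^\- (p, y))%E.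
  apply/funext => p; rewrite integralE.
  by congr (_ - _)%E; apply: eq_integral => y _; rewrite ?funeposE ?funenegE.
apply: emeasurable_funB.
- apply: (measurable_fun_fubini_tonelli_F (m2 := mu) ((EFin \o H)^\+)%E) => //.
  exact: measurable_funepos.
- apply: (measurable_fun_fubini_tonelli_F (m2 := mu) ((EFin \o H)^\-)%E) => //.
  exact: measurable_funeneg.
Qed.

Lemma measurable_Riter_param n d (T : measurableType d) (G : T * n.-tuple R -> R) :
  measurable_fun setT G -> measurable_fun setT (fun p => Riter R n (fun x => G (p, x))).
Proof.
elim: n d T G => [|n IH] d T G mG /=.
  by apply: measurableT_comp mG _; apply: measurable_fun_pair.
pose H (q : T * R) := Riter R n (fun x => G (q.1, cons_tuple q.2 x)).
suff mH : measurable_fun setT H by exact: measurable_Rintegral_param H mH.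
apply: (IH _ _ (fun z : (T * R) * n.-tuple R => G (z.1.1, cons_tuple z.1.2 z.2))).
apply: measurableT_comp mG _; apply: measurable_fun_pair.
  exact: measurableT_comp measurable_fst measurable_fst.
exact: measurable_cons (measurableT_comp measurable_snd measurable_fst) measurable_snd.
Qed.

Lemma eq_Riter n (g1 g2 : n.-tuple R -> R) : g1 =1 g2 -> Riter R n g1 = Riter R n g2.
Proof. by move=> /funext ->. Qed.

Lemma Riter0 n : Riter R n (fun _ => 0) = 0.
Proof.
elim: n => [//|n IH] /=.
by under eq_Rintegral do rewrite IH; rewrite Rintegral_cst // mul0r.
Qed.

Lemma Riter_ge0 n (g : n.-tuple R -> R) : (forall x, 0 <= g x) -> 0 <= Riter R n g.
Proof.
elim: n g => [|n IH] g g0 /=; first exact: g0.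
by apply: Rintegral_ge0 => t _; apply: IH.
Qed.

Definition in_box n (K : R) (x : n.-tuple R) := forall i, `|tnth x i| <= K.

(* [Riter] is built from the real-valued [Rintegral], which is junk on
   non-integrable sections; for bounded functions vanishing outside a cube every
   section at every level is integrable. *)
Definition box_bounded n (M K : R) (g : n.-tuple R -> R) :=
  [/\ 0 < K, measurable_fun setT g, forall x, `|g x| <= M
    & forall x, ~ in_box K x -> g x = 0].

Section box_bounded_section.
Variables (n : nat) (M K : R) (g : n.+1.-tuple R -> R).
Hypothesis gMK : box_bounded M K g.

Lemma box_bounded_section t : box_bounded M K (fun x => g (cons_tuple t x)).
Proof.
case: gMK => K0 mg gM gK; split => //.
- apply: (measurable_fun_pair2 (f := fun z : R * n.-tuple R => g (cons_tuple z.1 z.2)) t).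
  apply: measurableT_comp mg _.
  exact: measurable_cons measurable_fst measurable_snd.
- move=> x xK; apply: (gK (cons_tuple t x)) => tx; apply: xK => i.
  by have := tx (lift ord0 i); rewrite tnthS.
Qed.

Lemma measurable_Riter_section :
  measurable_fun setT (fun t => Riter R n (fun x => g (cons_tuple t x))).
Proof.
case: gMK => _ mg _ _.
pose G (z : R * n.-tuple R) := g (cons_tuple z.1 z.2).
suff mG : measurable_fun setT G by exact: measurable_Riter_param G mG.
apply: measurableT_comp mg _.
exact: measurable_cons measurable_fst measurable_snd.
Qed.

Lemma Riter_section_out t : K < `|t| -> Riter R n (fun x => g (cons_tuple t x)) = 0.
Proof.
case: gMK => _ _ _ gK Kt; rewrite -(Riter0 n); apply: eq_Riter => x.
by apply: gK => tx; have := tx ord0; rewrite tnth0 leNgt Kt.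
Qed.

End box_bounded_section.

Lemma Riter_bounded n M K (g : n.-tuple R -> R) :
  box_bounded M K g -> `|Riter R n g| <= M * (K + K) ^+ n.
Proof.
elim: n M K g => [|n IH] M K g gMK.
  by case: gMK => _ _ gM _; rewrite /= expr0 mulr1.
have [K0 _ _ _] := gMK.
rewrite exprSr mulrA; apply: (Rintegral_bounded_supported K0).
- exact: measurable_Riter_section gMK.
- by move=> t; exact: IH (box_bounded_section gMK t).
- exact: Riter_section_out gMK.
Qed.

Lemma integrable_Riter_section n M K (g : n.+1.-tuple R -> R) : box_bounded M K g ->
  mu.-integrable setT (EFin \o (fun t => Riter R n (fun x => g (cons_tuple t x)))).
Proof.
move=> gMK; have [K0 _ _ _] := gMK.
apply: (@integrable_bounded_supported _ _ (M * (K + K) ^+ n) K K0).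
- exact: measurable_Riter_section gMK.
- by move=> t; exact: Riter_bounded (box_bounded_section gMK t).
- exact: Riter_section_out gMK.
Qed.

Definition tame n (g : n.-tuple R -> R) := exists M K, box_bounded M K g.

Lemma tame_section n (g : n.+1.-tuple R -> R) t :
  tame g -> tame (fun x => g (cons_tuple t x)).
Proof. by case=> M [K gMK]; exists M, K; exact: box_bounded_section. Qed.

Lemma Riter_lincomb n (g1 g2 : n.-tuple R -> R) (a b : R) : tame g1 -> tame g2 ->
  Riter R n (fun x => a * g1 x + b * g2 x) = a * Riter R n g1 + b * Riter R n g2.
Proof.
elim: n g1 g2 => [//|n IH] g1 g2 tg1 tg2 /=.
under eq_Rintegral => t _ do rewrite (IH _ _ (tame_section t tg1) (tame_section t tg2)).
have intZ c (G : R -> R) : mu.-integrable setT (EFin \o G) ->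
    mu.-integrable setT (EFin \o (fun t => c * G t)).
  by move=> iG; apply: eq_integrable (integrableZl measurableT c iG).
have [[M1 [K1 g1MK]] [M2 [K2 g2MK]]] := (tg1, tg2).
have [i1 i2] := (integrable_Riter_section g1MK, integrable_Riter_section g2MK).
by rewrite RintegralD ?RintegralZl //; exact: intZ.
Qed.

End Riter_theory.

Section ahlswede_daykin.
Variable R : realType.
Notation mu := (@lebesgue_measure R).

Definition tmax n (x y : n.-tuple R) : n.-tuple R :=
  [tuple Num.max (tnth x i) (tnth y i) | i < n].

Lemma tmax_cons n s t (x y : n.-tuple R) :
  tmax (cons_tuple s x) (cons_tuple t y) = cons_tuple (Num.max s t) (tmax x y).
Proof.
apply: eq_from_tnth => i; case: (unliftP ord0 i) => [j ->|->].
  by rewrite tnth_mktuple !tnthS tnth_mktuple.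
by rewrite tnth_mktuple !tnth0.
Qed.

Lemma tmin_cons n s t (x y : n.-tuple R) :
  tmin R n.+1 (cons_tuple s x) (cons_tuple t y) = cons_tuple (Num.min s t) (tmin R n x y).
Proof.
apply: eq_from_tnth => i; case: (unliftP ord0 i) => [j ->|->].
  by rewrite tnth_mktuple !tnthS tnth_mktuple.
by rewrite tnth_mktuple !tnth0.
Qed.

Lemma Riter_cons n (g : n.+1.-tuple R -> R) : tame g ->
  (Riter R n.+1 g)%:E = (\int[mu]_s (Riter R n (fun x => g (cons_tuple s x)))%:E)%E.
Proof.
case=> M [K gMK]; rewrite fineK //.
by have := integrable_fin_num measurableT (integrable_Riter_section gMK).
Qed.

Theorem Riter_ahlswede_daykin n (a b c e : n.-tuple R -> R) :
  tame a -> tame b -> tame c -> tame e ->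
  (forall x, 0 <= a x) -> (forall x, 0 <= b x) ->
  (forall x, 0 <= c x) -> (forall x, 0 <= e x) ->
  (forall x y, a x * b y <= c (tmax x y) * e (tmin R n x y)) ->
  Riter R n a * Riter R n b <= Riter R n c * Riter R n e.
Proof.
elim: n a b c e => [|n IH] a b c e ta tb tc te a0 b0 c0 e0 H.
  by have := H [tuple] [tuple]; rewrite [tmax _ _]tuple0 [tmin _ _ _ _]tuple0.
rewrite -lee_fin !EFinM !Riter_cons //.
have msec g : tame g -> measurable_fun setT (fun s => Riter R n (fun x => g (cons_tuple s x))).
  by case=> M [K gMK]; exact: measurable_Riter_section gMK.
apply: ahlswede_daykin_line; try exact: msec; try by move=> s; apply: Riter_ge0.
move=> s t; apply: IH; try exact: tame_section; try by move=> x.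
by move=> x y; rewrite -tmax_cons -tmin_cons.
Qed.

End ahlswede_daykin.

Lemma tle_tmaxl (R : realType) n (x y : n.-tuple R) : tle R n x (tmax x y).
Proof. by move=> i; rewrite tnth_mktuple le_max lexx. Qed.

Lemma tle_tmaxr (R : realType) n (x y : n.-tuple R) : tle R n y (tmax x y).
Proof. by move=> i; rewrite tnth_mktuple le_max lexx orbT. Qed.

Lemma mulr_gaps_le_max_min (R : realDomainType) (a b c d : R) : a <= b -> c <= d ->
  (b - a) * (d - c) <= (Num.max b d - Num.max a c) * (Num.min b d - Num.min a c).
Proof.
move=> ab cd; have [ac|ca] := leP a c; have [bd|db] := leP b d.
- by rewrite mulrC.
- have : 0 <= (c - a) * (b - d) by rewrite mulr_ge0 // subr_ge0 // ltW.
  nra.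
- have : 0 <= (a - c) * (d - b) by rewrite mulr_ge0 // subr_ge0 // ltW.
  nra.
- by [].
Qed.

Section Omega_lattice.
Variables (R : realType) (N : nat).
Hypothesis N2 : (2 <= N)%N.

Lemma xc_map2 (F : R -> R -> R) (x y : N.-1.-tuple R) k :
  F 0 0 = 0 -> F N%:R N%:R = N%:R ->
  xc R N [tuple F (tnth x i) (tnth y i) | i < N.-1] k = F (xc R N x k) (xc R N y k).
Proof.
move=> F0 FN; rewrite /xc; case: eqP => _ //; case: eqP => _ //.
have [lt|ge] := ltnP k.-1 N.-1; last by rewrite !nth_default ?size_tuple.
have nthE (z : N.-1.-tuple R) : nth 0 z k.-1 = tnth z (Ordinal lt) by rewrite (tnth_nth 0).
by rewrite !nthE tnth_mktuple.
Qed.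

Lemma Omega_tmax (x y : N.-1.-tuple R) :
  Omega R N x -> Omega R N y -> Omega R N (tmax x y).
Proof.
move=> hx hy k kN; rewrite !xc_map2 ?maxxx // ge_max !le_max.
by rewrite (hx k kN) (hy k kN) orbT.
Qed.

Lemma Omega_tmin (x y : N.-1.-tuple R) :
  Omega R N x -> Omega R N y -> Omega R N (tmin R N.-1 x y).
Proof.
move=> hx hy k kN; rewrite !xc_map2 ?minxx // le_min !ge_min.
by rewrite (hx k kN) (hy k kN) orbT.
Qed.

Lemma xc0 (x : N.-1.-tuple R) : xc R N x 0 = 0.
Proof. by []. Qed.

Lemma xcN (x : N.-1.-tuple R) : xc R N x N = N%:R.
Proof. by rewrite /xc eqxx gtn_eqF // ltnW. Qed.

Lemma xc_tnth (x : N.-1.-tuple R) (i : 'I_N.-1) : xc R N x i.+1 = tnth x i.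
Proof.
have iN : (i.+1 < N)%N by rewrite -ltn_predRL.
by rewrite /xc /= (ltn_eqF iN) (tnth_nth 0).
Qed.

Lemma Omega_xc_le (x : N.-1.-tuple R) j k :
  Omega R N x -> (j <= k <= N)%N -> xc R N x j <= xc R N x k.
Proof.
move=> hx /andP[]; elim: k => [|k IH]; first by rewrite leqn0 => /eqP ->.
rewrite leq_eqVlt => /predU1P[-> //|jk] kN.
exact: le_trans (IH jk (ltnW kN)) (hx k kN).
Qed.

Lemma Omega_tnth (x : N.-1.-tuple R) i : Omega R N x -> 0 <= tnth x i <= N%:R.
Proof.
move=> hx; have iN : (i.+1 <= N)%N by rewrite ltnW // -ltn_predRL.
rewrite -xc_tnth -(xc0 x) -(xcN x).
by rewrite !Omega_xc_le // ?iN // leqnn andbT.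
Qed.

Lemma Omega_nseq (c : R) : 0 <= c <= N%:R -> Omega R N [tuple of nseq N.-1 c].
Proof.
move=> /andP[c0 cN] k kN; rewrite /xc !nth_nseq (ltn_eqF kN) /=.
by repeat case: ifP => ? //=; lra || lia.
Qed.

Lemma dens_mtp2 (alpha : R) (x y : N.-1.-tuple R) :
  1 <= alpha -> Omega R N x -> Omega R N y ->
  dens R N alpha x * dens R N alpha y <=
  dens R N alpha (tmax x y) * dens R N alpha (tmin R N.-1 x y).
Proof.
move=> a1 hx hy; rewrite /dens -!big_split /=.
rewrite [X in X <= _]big_nat_cond [X in _ <= X]big_nat_cond.
apply: ler_prod => i; rewrite andbT => /andP[i1 iN]; rewrite mulr_ge0 ?powR_ge0 //=.
case: i i1 iN => // k _; rewrite ltnS => kN.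
have := hx k kN; have := hy k kN.
rewrite !xc_map2 ?maxxx ?minxx //.
set a := xc R N x k; set b := xc R N x k.+1; set c := xc R N y k; set d := xc R N y k.+1.
move=> cd ab.
have le_max_min : Num.max a c <= Num.max b d /\ Num.min a c <= Num.min b d.
  by rewrite ge_max !le_max le_min !ge_min ab cd !orbT.
rewrite -!powRM ?subr_ge0 //; try by case: le_max_min.
apply: ge0_ler_powR; rewrite ?subr_ge0 ?nnegrE ?mulr_ge0 ?subr_ge0 //;
  try by case: le_max_min.
exact: mulr_gaps_le_max_min.
Qed.

End Omega_lattice.

Definition weight (R : realType) (N : nat) (alpha : R) (x : N.-1.-tuple R) :=
  \1_(Omega R N) x * dens R N alpha x.
Arguments weight : clear implicits.

Section weight.
Variables (R : realType) (N : nat) (alpha : R).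
Hypotheses (N2 : (2 <= N)%N) (a1 : 1 <= alpha).
Local Notation Om := (Omega R N).

Lemma measurable_xc k : measurable_fun setT (fun x : N.-1.-tuple R => xc R N x k).
Proof.
rewrite /xc; case: eqP => _; first exact: measurable_cst.
case: eqP => _; first exact: measurable_cst.
have [lt|ge] := ltnP k.-1 N.-1.
  under eq_fun do rewrite -(tnth_nth 0 _ (Ordinal lt)).
  exact: measurable_tnth.
under eq_fun do rewrite nth_default ?size_tuple //.
exact: measurable_cst.
Qed.

Lemma measurable_Omega : measurable Om.
Proof.
rewrite (_ : Om = \bigcap_(k in [set k | (k < N)%N])
                    (setT `&` [set x | xc R N x k <= xc R N x k.+1])); last first.
  by apply/seteqP; split => x hx k kN; [split; [|exact: hx] | case: (hx k kN)].
apply: bigcap_measurableType => k _.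
by apply: measurable_fun_le => //; exact: measurable_xc.
Qed.

Lemma measurable_dens : measurable_fun setT (dens R N alpha).
Proof.
apply: measurable_prod => i _.
apply: measurableT_comp (measurable_powR _) _.
exact: measurable_funB (measurable_xc _) (measurable_xc _).
Qed.

Lemma dens_ge0 x : 0 <= dens R N alpha x.
Proof. by apply: prodr_ge0 => i _; exact: powR_ge0. Qed.

Lemma dens_le x : Om x -> dens R N alpha x <= (N%:R `^ (alpha - 1)) ^+ N.
Proof.
move=> hx; rewrite /dens.
have -> : (N%:R `^ (alpha - 1)) ^+ N = \prod_(1 <= i < N.+1) N%:R `^ (alpha - 1).
  by rewrite prodr_const_nat subn1.
rewrite big_nat_cond [X in _ <= X]big_nat_cond.
apply: ler_prod => -[//|k]; rewrite andbT => /andP[_]; rewrite ltnS => kN.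
rewrite powR_ge0 /=; apply: ge0_ler_powR; rewrite ?nnegrE ?subr_ge0 ?(hx k kN) //.
have x0 : 0 <= xc R N x k by rewrite -(xc0 x); apply: Omega_xc_le => //=; exact: ltnW.
have xN : xc R N x k.+1 <= N%:R.
  by rewrite -(xcN N2 x); apply: Omega_xc_le; rewrite // kN leqnn.
lra.
Qed.

Local Notation weight := (weight R N alpha).

Lemma weight_ge0 x : 0 <= weight x.
Proof. by rewrite mulr_ge0 ?dens_ge0. Qed.

Lemma weight_out x : ~ Om x -> weight x = 0.
Proof. by move=> nx; rewrite /weight indicE memNset // mul0r. Qed.

Lemma weight_in x : Om x -> weight x = dens R N alpha x.
Proof. by move=> Ox; rewrite /weight indicE mem_set // mul1r. Qed.

Lemma weight_mtp2 x y :
  weight x * weight y <= weight (tmax x y) * weight (tmin R N.-1 x y).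
Proof.
have [[Ox Oy]|] := pselect (Om x /\ Om y); last first.
  move=> /not_andP nxy; apply: le_trans (mulr_ge0 (weight_ge0 _) (weight_ge0 _)).
  by case: nxy => /weight_out ->; rewrite ?mul0r ?mulr0.
have [OX OY] := (Omega_tmax Ox Oy, Omega_tmin Ox Oy).
by rewrite !weight_in //; exact: dens_mtp2.
Qed.

Lemma tame_weightM (g : N.-1.-tuple R -> R) (G : R) :
  measurable_fun Om g -> (forall x, Om x -> `|g x| <= G) -> tame (fun x => weight x * g x).
Proof.
move=> mg gG; exists ((N%:R `^ (alpha - 1)) ^+ N * `|G|), (N%:R + 1); split.
- by rewrite ltr_wpDl.
- rewrite (_ : (fun x => _) = (fun x => weight x * (g \_ Om) x)); last first.
    apply/funext => x; rewrite patchE; case: ifP => // /negbT nx.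
    by rewrite weight_out ?mul0r // => Ox; move: nx; rewrite mem_set.
  apply: measurable_funM; last exact: (measurable_restrictT _ measurable_Omega).1.
  by apply: measurable_funM; [exact: measurable_indic measurable_Omega|exact: measurable_dens].
- move=> x; have [Ox|nx] := pselect (Om x); last first.
    by rewrite weight_out // mul0r normr0 mulr_ge0 ?exprn_ge0 ?powR_ge0.
  rewrite weight_in // normrM ger0_norm ?dens_ge0 //.
  apply: ler_pM; [exact: dens_ge0|exact: normr_ge0|exact: dens_le|].
  exact: le_trans (gG x Ox) (ler_norm G).
- move=> x xK; rewrite weight_out ?mul0r // => Ox; apply: xK => i.
  have /andP[t0 tN] := Omega_tnth N2 i Ox.
  by rewrite ger0_norm // ler_wpDr.
Qed.

End weight.

Lemma indic_ge0 T (R : numDomainType) (S : set T) x : 0 <= \1_S x :> R.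
Proof. by rewrite indicE. Qed.

Lemma normr_indic_le1 T (R : numDomainType) (S : set T) x : `|\1_S x| <= 1 :> R.
Proof. by rewrite indicE; case: (x \in S); rewrite ?normr1 ?normr0. Qed.

Section holley.
Variables (R : realType) (N : nat) (alpha : R).
Hypotheses (N2 : (2 <= N)%N) (a1 : 1 <= alpha).
Local Notation Om := (Omega R N).
Local Notation weight := (weight R N alpha).
Variables (A B : set (N.-1.-tuple R)) (h : N.-1.-tuple R -> R) (H : R).
Hypotheses (mA : measurable A) (mB : measurable B).
Hypotheses (incrA : incr_set R N A) (BO : B `<=` Om).
Hypothesis AB_tmin : forall x y, A x -> B y -> B (tmin R N.-1 x y).
Hypotheses (mh : measurable_fun Om h) (incrh : incr_fun R N h).
Hypotheses (h0 : forall x, Om x -> 0 <= h x) (hH : forall x, Om x -> h x <= H).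

Lemma incr_set_mem x y : A x -> Om y -> tle R N.-1 x y -> A y.
Proof.
case: incrA => AO incr Ax Oy xy; have := incr x y (AO x Ax) Oy xy.
rewrite !indicE mem_set //; case: (boolP (y \in A)) => [/set_mem //|_].
by rewrite ler10.
Qed.

Let tame_weight_indic S : measurable S -> tame (fun x => weight x * \1_S x).
Proof.
move=> mS; apply: (@tame_weightM _ _ _ N2 a1 _ 1); first exact: measurable_indic.
by move=> x _; exact: normr_indic_le1.
Qed.

Let tame_weight_h_indic S : measurable S -> tame (fun x => weight x * (h x * \1_S x)).
Proof.
move=> mS; apply: (@tame_weightM _ _ _ N2 a1 _ H).
  by apply: measurable_funM => //; exact: measurable_indic.
move=> x Ox; rewrite normrM ger0_norm ?h0 // -[H]mulr1.
by apply: ler_pM; [exact: h0|exact: normr_ge0|exact: hH|exact: normr_indic_le1].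
Qed.

Lemma Riter_holley :
  Riter R N.-1 (fun x => weight x * \1_A x) * Riter R N.-1 (fun x => weight x * (h x * \1_B x))
  <= Riter R N.-1 (fun x => weight x * (h x * \1_A x)) * Riter R N.-1 (fun x => weight x * \1_B x).
Proof.
have hS0 S x : 0 <= weight x * (h x * \1_S x).
  have [Ox|nx] := pselect (Om x); last by rewrite weight_out ?mul0r.
  by rewrite mulr_ge0 ?weight_ge0 // mulr_ge0 ?indic_ge0 ?h0.
apply: Riter_ahlswede_daykin; try exact: tame_weight_indic; try exact: tame_weight_h_indic;
  try by move=> x; rewrite mulr_ge0 ?weight_ge0 ?indic_ge0.
1,2: by move=> x; exact: hS0.
move=> x y; have [Ax|nAx] := pselect (A x); last first.
  by rewrite indicE memNset // mulr0 mul0r mulr_ge0 // mulr_ge0 ?weight_ge0.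
have [By|nBy] := pselect (B y); last first.
  by rewrite [\1_B y]indicE memNset // !mulr0 mulr_ge0 // mulr_ge0 ?weight_ge0.
have [Ox Oy] := (incrA.1 x Ax, BO By).
have AX : A (tmax x y) := incr_set_mem Ax (Omega_tmax Ox Oy) (tle_tmaxl x y).
have hy_le : h y <= h (tmax x y) by apply: incrh (Omega_tmax Ox Oy) (tle_tmaxr x y).
have BY := AB_tmin Ax By.
rewrite !indicE !mem_set //= !mulr1.
have := weight_mtp2 a1 x y; have := h0 Oy.
have := mulr_ge0 (weight_ge0 alpha (tmax x y)) (weight_ge0 alpha (tmin R N.-1 x y)).
nra.
Qed.

End holley.

Lemma ler_ratio_cross (R : realFieldType) (z ua va ub vb : R) :
  0 < z * va -> 0 < z * vb -> va * ub <= ua * vb ->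
  z * ub / (z * vb) <= z * ua / (z * va).
Proof.
move=> za zb le_cross; rewrite ler_pdivrMr // mulrAC ler_pdivlMr //.
rewrite [X in X <= _](_ : _ = z ^+ 2 * (va * ub)); last by ring.
rewrite [X in _ <= X](_ : _ = z ^+ 2 * (ua * vb)); last by ring.
by rewrite ler_wpM2l ?sqr_ge0.
Qed.

Section increasing_on_Omega.
Variables (R : realType) (N : nat) (alpha : R).
Hypotheses (N2 : (2 <= N)%N) (a1 : 1 <= alpha).
Local Notation Om := (Omega R N).
Local Notation weight := (weight R N alpha).
Variable f : N.-1.-tuple R -> R.
Hypotheses (mf : measurable_fun Om f) (incrf : incr_fun R N f).

Lemma incr_fun_Omega_bounds x : Om x ->
  f [tuple of nseq N.-1 0] <= f x <= f [tuple of nseq N.-1 N%:R].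
Proof.
move=> Ox; have O0 : Om [tuple of nseq N.-1 0].
  by apply: Omega_nseq => //; rewrite lexx ler0n.
have ON : Om [tuple of nseq N.-1 N%:R] by apply: Omega_nseq => //; rewrite lexx ler0n.
apply/andP; split; apply: incrf => // i; rewrite tnth_nseq.
  by case/andP: (Omega_tnth N2 i Ox).
by case/andP: (Omega_tnth N2 i Ox).
Qed.

Lemma Riter_weight_shift S c : measurable S ->
  Riter R N.-1 (fun x => weight x * ((f x - c) * \1_S x)) =
  Riter R N.-1 (fun x => weight x * (f x * \1_S x))
    - c * Riter R N.-1 (fun x => weight x * \1_S x).
Proof.
move=> mS; pose z0 := [tuple of nseq N.-1 (0 : R)].
pose zN := [tuple of nseq N.-1 (N%:R : R)].
have tame_f : tame (fun x => weight x * (f x * \1_S x)).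
  apply: (@tame_weightM _ _ _ N2 a1 _ (`|f z0| + `|f zN|)).
    by apply: measurable_funM => //; exact: measurable_indic.
  move=> x Ox; rewrite normrM -[_ + _]mulr1; apply: ler_pM => //; last exact: normr_indic_le1.
  have /andP[f0 fN] := incr_fun_Omega_bounds Ox.
  have := ler_norm (- f z0); have := ler_norm (f zN); rewrite normrN.
  have := normr_ge0 (f z0); have := normr_ge0 (f zN).
  by move=> *; rewrite ler_norml; apply/andP; split; lra.
have tame_1 : tame (fun x => weight x * \1_S x).
  apply: (@tame_weightM _ _ _ N2 a1 _ 1); first exact: measurable_indic.
  by move=> x _; exact: normr_indic_le1.
transitivity (Riter R N.-1 (fun x =>
    1 * (weight x * (f x * \1_S x)) + (- c) * (weight x * \1_S x))).
  by apply: eq_Riter => x; ring.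
by rewrite Riter_lincomb // mul1r mulNr.
Qed.

End increasing_on_Omega.

Theorem lemma2p4 (R : realType) (N : nat) (alpha : R)
    (A B : set (N.-1.-tuple R)) :
  1 <= alpha -> (2 <= N)%N ->
  measurable A -> measurable B ->
  incr_set R N A -> incr_set R N B ->
  0 < piNset R N alpha A -> 0 < piNset R N alpha B ->
  (forall x x', A x -> B x' -> B (tmin R N.-1 x x')) ->
  forall f : N.-1.-tuple R -> R,
    measurable_fun (Omega R N) f -> incr_fun R N f ->
    condE R N alpha f A >= condE R N alpha f B.
Proof.
move=> a1 N2 mA mB incrA [BO _] pA pB AB_tmin f mf incrf.
have bounds := incr_fun_Omega_bounds N2 incrf.
pose c := f [tuple of nseq N.-1 0]; pose h x := f x - c.
have mh : measurable_fun (Omega R N) h by apply: measurable_funB => //; exact: measurable_cst.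
have incrh : incr_fun R N h by move=> x y Ox Oy xy; rewrite lerB // incrf.
have h0 x : Omega R N x -> 0 <= h x by move=> /bounds /andP[? _]; rewrite subr_ge0.
have hH x : Omega R N x -> h x <= f [tuple of nseq N.-1 N%:R] - c.
  by move=> /bounds /andP[_ ?]; rewrite lerB.
have := Riter_holley N2 a1 mA mB incrA BO AB_tmin mh incrh h0 hH.
rewrite /h !Riter_weight_shift // => key.
apply: ler_ratio_cross pA pB _; lra.
Qed.
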